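(* Let $n\ge3$, let $S_n$ act on $V=\mathbb{C}^n$ by permutations, and fix $a,b\in\mathbb{C}$. Then $\phi(\kappa^L_{\mathrm{tri}},\kappa^L_{\mathrm{tri}})=2\psi(\kappa^C_{\mathrm{penta}})$.
   Context: $S_n$ acts by $\sigma e_i=e_{\sigma(i)}$; $V^g$ is the fixed space of $g$. $\kappa^L_{\mathrm{tri}}=\sum_g\kappa^L_gg$ is the linear 2-cochain supported on 3-cycles with $\kappa^L_{(ijk)}(e_i,e_j)=\kappa^L_{(ijk)}(e_j,e_k)=\kappa^L_{(ijk)}(e_k,e_i)=a(e_i+e_j+e_k)+b\sum_{l\notin\{i,j,k\}}e_l$ and $\kappa^L_{(ijk)}(e_l,e_m)=0$ whenever $e_l$ or $e_m$ lies in $V^{(ijk)}$. $\kappa^C_{\mathrm{penta}}=\sum_g\kappa^C_gg$ is the constant 2-cochain with $\kappa^C_g=0$ unless $g$ is a 5-cycle, and for a 5-cycle $g$, $\kappa^C_g(e_i,e_j)=(a-b)^2([g]_{ij}-[g]_{ji}-2[g^2]_{ij}+2[g^2]_{ji})$, where $[h]_{ij}=1$ if $i=h(j)$ and $0$ otherwise. For a 2-cochain $\alpha$, $\psi(\alpha)=\sum_g\psi_gg$ with $\psi_g(v_1,v_2,v_3)=\alpha_g(v_1,v_2)(gv_3-v_3)+\alpha_g(v_2,v_3)(gv_1-v_1)+\alpha_g(v_3,v_1)(gv_2-v_2)$; for $\alpha,\beta$ with $\beta$ linear, $\phi(\alpha,\beta)=\sum_g\phi_gg$, $\phi_g=\sum_{xy=g}\phi_{x,y}$,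 $\phi_{x,y}(v_1,v_2,v_3)=\alpha_x(v_1+yv_1,\beta_y(v_2,v_3))+\alpha_x(v_2+yv_2,\beta_y(v_3,v_1))+\alpha_x(v_3+yv_3,\beta_y(v_1,v_2))$. *)

From HB Require Import structures.
From mathcomp Require Import all_boot all_order all_algebra all_fingroup.
From mathcomp Require Import complex Rstruct.
Set Implicit Arguments. Unset Strict Implicit. Unset Printing Implicit Defensive.
Import GRing.Theory.
Local Open Scope ring_scope.

Definition C : fieldType := (Rdefinitions.R)[i].

Section Cochains.
Variable n : nat.

Notation V := 'rV[C]_n.

Definition e (i : 'I_n) : V := delta_mx 0 i.

(* permutation action  sigma e_i = e_(sigma i), i.e. (sigma v)_j = v_(sigma^-1 j) *)
Definition pact (s : 'S_n) (v : V) : V := \row_j v 0 (s^-1 j)%g.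

(* product x y in the group S_n, as the paper writes it: the composite x o y
   (so that pact (gmul x y) = pact x o pact y).  Note mathcomp's (y * x)%g
   is the function  i |-> x (y i). *)
Definition gmul (x y : 'S_n) : 'S_n := (y * x)%g.

Definition is_cycle (k : nat) (g : 'S_n) : bool :=
  [exists x, (#|porbit g x| == k) && [forall y, (y \notin porbit g x) ==> (g y == y)]].

Definition bilin (X : lmodType C) (f : 'I_n -> 'I_n -> X) (v1 v2 : V) : X :=
  \sum_(p < n) \sum_(q < n) (v1 0 p * v2 0 q) *: f p q.

Definition lin2cochain := 'S_n -> V -> V -> V.
Definition const2cochain := 'S_n -> V -> V -> C.
Definition lin3cochain := 'S_n -> V -> V -> V -> V.

Definition kappaL_basis (a b : C) (g : 'S_n) (p q : 'I_n) : V :=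
  let w : V := \row_l (if g l != l then a else b) in
  if is_cycle 3 g && (g p != p) && (g q != q) then
    (if q == g p then w else if p == g q then - w else 0)
  else 0.

Definition kappaL_tri (a b : C) : lin2cochain :=
  fun g => bilin (kappaL_basis a b g).

Definition pmat (h : 'S_n) (i j : 'I_n) : C := if i == h j then 1 else 0.

Definition kappaC_basis (a b : C) (g : 'S_n) (i j : 'I_n) : C :=
  if is_cycle 5 g then
    (a - b) ^+ 2 * (pmat g i j - pmat g j i - 2 * pmat (g * g)%g i j
                    + 2 * pmat (g * g)%g j i)
  else 0.

Definition kappaC_penta (a b : C) : const2cochain :=
  fun g => bilin (X := C^o) (kappaC_basis a b g).

Definition psi (alpha : const2cochain) : lin3cochain :=
  fun g v1 v2 v3 =>
    alpha g v1 v2 *: (pact g v3 - v3) + alpha g v2 v3 *: (pact g v1 - v1)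
    + alpha g v3 v1 *: (pact g v2 - v2).

(* phi(alpha, beta) for linear beta (here alpha linear too, so values in V) *)
Definition phi_xy (alpha beta : lin2cochain) (x y : 'S_n) (v1 v2 v3 : V) : V :=
  alpha x (v1 + pact y v1) (beta y v2 v3) + alpha x (v2 + pact y v2) (beta y v3 v1)
  + alpha x (v3 + pact y v3) (beta y v1 v2).

Definition phi (alpha beta : lin2cochain) : lin3cochain :=
  fun g v1 v2 v3 =>
    \sum_(x : 'S_n) \sum_(y : 'S_n | gmul x y == g) phi_xy alpha beta x y v1 v2 v3.

End Cochains.

(* For a 3-cycle x, kappa^L_x(u, v) = omega_x(u, v) w_x, where
   omega_h(u, v) = sum_m (u_m v_(h m) - u_(h m) v_m) and w_x equals a on the
   support of x and b off it; at a 5-cycle g, kappa^C_g = (a - b)^2 (2 omega_(g^2) - omega_g).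
   Since omega_x(u, -) kills x-invariant vectors, phi_(x,y) vanishes when the
   3-cycles x and y have disjoint supports, and a direct computation disposes of
   supports sharing two or three points.  If they share exactly one point q, then
   xy is the 5-cycle (q, y q, y^2 q, x q, x^2 q), and every 5-cycle arises in
   exactly five ways, one for each point of its support.  Comparing the five
   resulting terms with 2 psi(kappa^C)_g coordinatewise is a polynomial identity. *)

From HB Require Import structures.
From mathcomp Require Import all_boot all_order all_algebra all_fingroup.
From mathcomp Require Import complex Rstruct.
From mathcomp Require Import ring.
Set Implicit Arguments. Unset Strict Implicit. Unset Printing Implicit Defensive.
Import GRing.Theory.
Local Open Scope ring_scope.

Ltac neq_simpl := do 4 (repeat match goal with
  | H : is_true (?a != ?b) |- context [?a == ?b] => rewrite (negbTE H)
  | H : is_true (?a != ?b) |- context [?b == ?a] => rewrite (eq_sym b a) (negbTE H)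
  end; rewrite ?eqxx /=); try done.

Ltac neq_sym := repeat match goal with H : is_true (?a != ?b) |- _ =>
  lazymatch goal with
  | _ : is_true (b != a) |- _ => fail
  | _ => have ? : b != a by rewrite eq_sym
  end end.

Ltac uniq_neq H := move: H; rewrite /= !inE !negb_or => H;
  repeat match goal with H : is_true (_ && _) |- _ => case/andP: H => ? ? end.

Section Cycles.
Variable n : nat.
Implicit Types (g : 'S_n) (q z : 'I_n).

Lemma is_cycle_traject k g q : is_cycle k g -> g q != q ->
  [/\ uniq (traject g q k), iter k g q = q &
      forall z, (g z != z) = (z \in traject g q k)].
Proof.
case/existsP=> x0 /andP[/eqP card_k /forallP fixed_out] gq.
have out_fixed z : z \notin porbit g x0 -> g z = z.
  by move=> zx; apply/eqP; move: (fixed_out z); rewrite zx.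
have orbit_q : porbit g q = porbit g x0.
  apply/eqP; rewrite eq_porbit_mem; apply: contraR gq => /out_fixed ->.
  by rewrite eqxx.
have card_q : #|porbit g q| = k by rewrite orbit_q.
split; [by rewrite -card_q uniq_traject_porbit | by rewrite -{1}card_q iter_porbit|].
move=> z; rewrite -card_q -porbit_traject.
apply/idP/idP => [|zq]; first by apply: contraR; rewrite orbit_q => /out_fixed ->.
apply/eqP => gz; have fixed_pow i : (g ^+ i)%g z = z.
  by elim: i => [|i IH]; rewrite ?perm1 // expgSr permM IH gz.
move: zq; rewrite porbit_sym => /porbitP[i qz].
by move: gq; rewrite qz fixed_pow gz eqxx.
Qed.

Lemma traject_is_cycle k g q : (0 < k)%N -> uniq (traject g q k) ->
  iter k g q = q -> (forall z, z \notin traject g q k -> g z = z) -> is_cycle k g.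
Proof.
move=> k_gt0 uniq_t iter_k fixed_out.
have closed z : z \in traject g q k -> g z \in traject g q k.
  case/trajectP=> j jk ->; rewrite -iterS.
  case: (ltnP j.+1 k) => jk1; first by apply/trajectP; exists j.+1.
  have -> : j.+1 = k by apply/eqP; rewrite eqn_leq jk1 andbT.
  by rewrite iter_k; apply/trajectP; exists 0%N.
have orbit_t : porbit g q =i traject g q k.
  move=> y; apply/idP/idP; last by case/trajectP=> i _ ->; rewrite -permX mem_porbit.
  case/porbitP=> i ->; rewrite permX; elim: i => [|i IH].
    by apply/trajectP; exists 0%N.
  by rewrite iterS; apply: closed.
apply/existsP; exists q; apply/andP; split.
  by rewrite (eq_card orbit_t) (card_uniqP uniq_t) size_traject.
by apply/forallP=> y; apply/implyP; rewrite orbit_t => /fixed_out ->.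
Qed.

Lemma is_cycle_moved k g : (1 < k)%N -> is_cycle k g -> exists q, g q != q.
Proof.
move=> k_gt1 /existsP[x0 /andP[/eqP card_k _]]; exists x0; apply/negP=> /eqP gx0.
have := uniq_traject_porbit g x0; rewrite card_k.
by case: k k_gt1 {card_k} => [|[|k]] //= _; rewrite gx0 inE eqxx.
Qed.

Lemma big_moved_cycle (X : nmodType) k g q (F : 'I_n -> X) :
  is_cycle k g -> g q != q ->
  \sum_(z in [set z | g z != z]) F z = \sum_(z <- traject g q k) F z.
Proof.
move=> g_cycle gq; have [uniq_t _ moved] := is_cycle_traject g_cycle gq.
by rewrite big_uniq //; apply: eq_bigl => z; rewrite inE moved.
Qed.

End Cycles.

Section ThreeCycles.
Variable n : nat.
Implicit Types (p q r z : 'I_n) (g : 'S_n).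

Definition cyc3 p q r : 'S_n := (tperm q r * tperm p q)%g.

Section Distinct.
Variables (p q r : 'I_n).
Hypotheses (pq : p != q) (qr : q != r) (pr : p != r).

Lemma cyc3E z :
  cyc3 p q r z = if z == p then q else if z == q then r else if z == r then p else z.
Proof.
rewrite permM; case: (z =P p) => [->|/eqP zp].
  by rewrite (tpermD (x:=q)) 1?eq_sym // tpermL.
case: (z =P q) => [->|/eqP zq]; first by rewrite tpermL tpermD.
case: (z =P r) => [->|/eqP zr]; first by rewrite !tpermR.
by rewrite !tpermD // eq_sym.
Qed.

Lemma cyc3VE z :
  (cyc3 p q r)^-1%g z = if z == p then r else if z == q then p else if z == r then q else z.
Proof.
apply: (canLR (permK (cyc3 p q r))); rewrite cyc3E; neq_sym.
by case: (z =P p) => [->|/eqP zp]; neq_simpl;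
   case: (z =P q) => [->|/eqP zq]; neq_simpl; case: (z =P r) => [->|/eqP zr]; neq_simpl.
Qed.

Lemma cyc3_moved z : (cyc3 p q r z != z) = (z \in [:: p; q; r]).
Proof.
rewrite cyc3E !inE; neq_sym.
by case: (z =P p) => [->|/eqP zp]; neq_simpl;
   case: (z =P q) => [->|/eqP zq]; neq_simpl; case: (z =P r) => [->|/eqP zr]; neq_simpl.
Qed.

Lemma cyc3_is_cycle : is_cycle 3 (cyc3 p q r).
Proof.
apply: (@traject_is_cycle _ 3 _ p) => //=.
- by rewrite !cyc3E; neq_sym; neq_simpl; rewrite !inE !negb_or; neq_simpl.
- by rewrite !cyc3E; neq_sym; neq_simpl.
- have -> : cyc3 p q r p = q by rewrite cyc3E eqxx.
  have -> : cyc3 p q r q = r by rewrite cyc3E eq_sym (negbTE pq) eqxx.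
  by move=> z; rewrite -cyc3_moved => /negPn/eqP.
Qed.

End Distinct.

Lemma cyc3_rot p q r : p != q -> q != r -> p != r -> cyc3 p q r = cyc3 q r p.
Proof.
move=> pq qr pr; neq_sym; apply/permP => z; rewrite !cyc3E //.
by case: (z =P p) => [->|/eqP zp]; neq_simpl.
Qed.

Lemma cycle3_cyc3 g q : is_cycle 3 g -> g q != q ->
  exists p r, [/\ q != p, p != r, q != r & g = cyc3 q p r].
Proof.
move=> g_cycle gq; have [uniq_t iter3 moved] := is_cycle_traject g_cycle gq.
move: (uniq_t); rewrite /= !inE !negb_or => /and3P[/andP[q1 q2] q12 _].
exists (g q), (g (g q)); split => //; apply/permP => z; rewrite cyc3E //.
case: (z =P q) => [->|/eqP zq] //; case: (z =P g q) => [->|/eqP zq1] //.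
case: (z =P g (g q)) => [->|/eqP zq2] //.
by apply/eqP; rewrite -[_ == _]negbK moved !inE !negb_or; neq_simpl.
Qed.

End ThreeCycles.

Section Bilinear.
Variables (n : nat) (X : lmodType C).
Implicit Types (f h : 'I_n -> 'I_n -> X) (u v : 'rV[C]_n).

Lemma eq_bilin f h u v : (forall i j, f i j = h i j) -> bilin f u v = bilin h u v.
Proof. by move=> fh; apply: eq_bigr => i _; apply: eq_bigr => j _; rewrite fh. Qed.

Lemma bilinD f h u v : bilin (fun i j => f i j + h i j) u v = bilin f u v + bilin h u v.
Proof.
rewrite /bilin -big_split; apply: eq_bigr => i _ /=.
by rewrite -big_split; apply: eq_bigr => j _; rewrite scalerDr.
Qed.

Lemma bilinB f h u v : bilin (fun i j => f i j - h i j) u v = bilin f u v - bilin h u v.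
Proof.
rewrite /bilin -sumrB; apply: eq_bigr => i _ /=.
by rewrite -sumrB; apply: eq_bigr => j _; rewrite scalerBr.
Qed.

Lemma bilinZ (c : C) f u v : bilin (fun i j => c *: f i j) u v = c *: bilin f u v.
Proof.
rewrite /bilin scaler_sumr; apply: eq_bigr => i _ /=.
by rewrite scaler_sumr; apply: eq_bigr => j _; rewrite !scalerA mulrC.
Qed.

Lemma bilin0r f u : bilin f u 0 = 0.
Proof. by rewrite /bilin big1 // => i _; rewrite big1 // => j _; rewrite mxE mulr0 scale0r. Qed.

Lemma bilin_scale (c : 'I_n -> 'I_n -> C) (w : X) u v :
  bilin (fun i j => c i j *: w) u v = bilin (X := C^o) c u v *: w.
Proof.
rewrite /bilin scaler_suml; apply: eq_bigr => i _.
by rewrite scaler_suml; apply: eq_bigr => j _; rewrite scalerA.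
Qed.

End Bilinear.

Section Forms.
Variable n : nat.
Implicit Types (g h : 'S_n) (u v w : 'rV[C]_n).

Lemma bilin_pmat h u v : bilin (X := C^o) (pmat h) u v = \sum_m u 0 (h m) * v 0 m.
Proof.
rewrite /bilin exchange_big; apply: eq_bigr => m _ /=.
rewrite (bigD1 (h m)) //= big1 ?addr0 => [|i /negbTE him].
  by rewrite /pmat eqxx [_ *: _]mulr1.
by rewrite /pmat him [_ *: _]mulr0.
Qed.

Lemma bilin_pmatT h u v :
  bilin (X := C^o) (fun i j => pmat h j i) u v = \sum_m u 0 m * v 0 (h m).
Proof.
apply: eq_bigr => m _; rewrite (bigD1 (h m)) //= big1 ?addr0 => [|j /negbTE jhm].
  by rewrite /pmat eqxx [_ *: _]mulr1.
by rewrite /pmat jhm [_ *: _]mulr0.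
Qed.

Definition perm_form h u v : C := \sum_m (u 0 m * v 0 (h m) - u 0 (h m) * v 0 m).

Lemma perm_formZr h u v (c : C) : perm_form h u (c *: v) = c * perm_form h u v.
Proof. by rewrite /perm_form mulr_sumr; apply: eq_bigr => m _; rewrite !mxE; ring. Qed.

Lemma perm_form_invariant h u w : (forall m, w 0 (h m) = w 0 m) -> perm_form h u w = 0.
Proof.
move=> w_inv; rewrite /perm_form sumrB.
have -> : \sum_m u 0 (h m) * w 0 m = \sum_m u 0 m * w 0 m.
  by rewrite [RHS](reindex_inj (@perm_inj _ h)); apply: eq_bigr => m _; rewrite w_inv.
by rewrite -sumrB big1 // => m _; rewrite w_inv subrr.
Qed.

Lemma perm_form_seq h (s : seq 'I_n) u v : uniq s -> (forall m, h m != m -> m \in s) ->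
  perm_form h u v = \sum_(m <- s) (u 0 m * v 0 (h m) - u 0 (h m) * v 0 m).
Proof.
move=> uniq_s moved_s; rewrite /perm_form (bigID (mem s)) /= [X in _ + X]big1 ?addr0.
  by rewrite big_uniq.
by move=> m /(contraNN (moved_s m))/negPn/eqP->; rewrite subrr.
Qed.

Definition moved_weight (a b : C) g : 'rV[C]_n := \row_l (if g l != l then a else b).

Lemma kappaL_basis_cycle3 a b g i j : is_cycle 3 g ->
  kappaL_basis a b g i j = (pmat g j i - pmat g i j) *: moved_weight a b g.
Proof.
move=> g3; rewrite /kappaL_basis g3 /pmat /=.
have no_swap k : g k != k -> g (g k) != k.
  move=> gk; have [/= + _ _] := is_cycle_traject g3 gk.
  by rewrite eq_sym !inE !negb_or => /and3P[/andP[_ ->]].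
have [gi|/negPn/eqP gi] := boolP (g i != i); last first.
  have -> : (i == g j) = (j == g i) by rewrite gi -{1}gi (inj_eq (@perm_inj _ g)) eq_sym.
  by rewrite subrr scale0r.
have [gj|/negPn/eqP gj] := boolP (g j != j); last first.
  have -> : (j == g i) = (i == g j) by rewrite gj -{1}gj (inj_eq (@perm_inj _ g)) eq_sym.
  by rewrite andbF subrr scale0r.
rewrite /=; case: (j =P g i) => [->|_].
  by rewrite eq_sym (negbTE (no_swap i gi)) subr0 scale1r.
by case: eqP => _; [rewrite sub0r scaleN1r | rewrite subrr scale0r].
Qed.

Lemma kappaL_tri_cycle3 a b g u v : is_cycle 3 g ->
  kappaL_tri a b g u v = perm_form g u v *: moved_weight a b g.
Proof.
move=> g3; rewrite /kappaL_tri (eq_bilin _ _ (fun i j => kappaL_basis_cycle3 a b i j g3)).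
by rewrite bilin_scale bilinB bilin_pmatT bilin_pmat /perm_form sumrB.
Qed.

Lemma kappaL_tri_not_cycle3 a b g u v : ~~ is_cycle 3 g -> kappaL_tri a b g u v = 0.
Proof.
move=> /negbTE g3; rewrite /kappaL_tri /bilin big1 // => i _; rewrite big1 // => j _.
by rewrite /kappaL_basis g3 scaler0.
Qed.

Lemma kappaC_penta_cycle5 a b g u v : is_cycle 5 g ->
  kappaC_penta a b g u v = (a - b) ^+ 2 * (2 * perm_form (g * g)%g u v - perm_form g u v).
Proof.
move=> g5; rewrite /kappaC_penta /kappaC_basis g5.
rewrite (bilinZ (X := C^o) ((a - b) ^+ 2) (fun i j => pmat g i j - pmat g j i
  - 2 * pmat (g * g)%g i j + 2 * pmat (g * g)%g j i)) [_ *: _]/=; congr (_ * _).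
rewrite bilinD bilinB bilinB (bilinZ (X := C^o) 2 (pmat _))
        (bilinZ (X := C^o) 2 (fun i j => pmat _ j i)).
rewrite !bilin_pmat !bilin_pmatT /perm_form !sumrB /GRing.scale /=.
ring.
Qed.

Lemma kappaC_penta_not_cycle5 a b g u v : ~~ is_cycle 5 g -> kappaC_penta a b g u v = 0.
Proof.
move=> /negbTE g5; rewrite /kappaC_penta /bilin big1 // => i _; rewrite big1 // => j _.
by rewrite /kappaC_basis g5 scaler0.
Qed.

End Forms.

Section ThreeCycleProducts.
Variables (n : nat) (a b : C).
Implicit Types (p q r z : 'I_n) (x y : 'S_n) (u v : 'rV[C]_n).
Local Notation kL := (kappaL_tri a b).

Lemma perm_form_cyc3 p q r u v : p != q -> q != r -> p != r ->
  perm_form (cyc3 p q r) u v =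
  u 0 p * (v 0 q - v 0 r) + u 0 q * (v 0 r - v 0 p) + u 0 r * (v 0 p - v 0 q).
Proof.
move=> pq qr pr; rewrite (@perm_form_seq _ _ [:: p; q; r]); last first.
- by move=> m; rewrite cyc3_moved.
- by rewrite /= !inE !negb_or; neq_sym; neq_simpl.
by rewrite !big_cons big_nil !cyc3E; neq_sym; neq_simpl; ring.
Qed.

Lemma phi_xy_not_cycle3 x y v1 v2 v3 : ~~ (is_cycle 3 x && is_cycle 3 y) ->
  phi_xy kL kL x y v1 v2 v3 = 0.
Proof.
rewrite /phi_xy negb_and => /orP[x3|y3]; first by rewrite !kappaL_tri_not_cycle3 // !addr0.
by rewrite !(kappaL_tri_not_cycle3 _ _ _ _ y3) /kappaL_tri !bilin0r !addr0.
Qed.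

Lemma phi_xy_cycle3 x y v1 v2 v3 : is_cycle 3 x -> is_cycle 3 y ->
  phi_xy kL kL x y v1 v2 v3 =
  (perm_form y v2 v3 * perm_form x (v1 + pact y v1) (moved_weight a b y)
 + perm_form y v3 v1 * perm_form x (v2 + pact y v2) (moved_weight a b y)
 + perm_form y v1 v2 * perm_form x (v3 + pact y v3) (moved_weight a b y))
  *: moved_weight a b x.
Proof. by move=> x3 y3; rewrite /phi_xy !kappaL_tri_cycle3 // !perm_formZr !scalerDl. Qed.

Lemma phi_xy_disjoint x y v1 v2 v3 : is_cycle 3 x -> is_cycle 3 y ->
  (forall z, x z != z -> y z = z) -> phi_xy kL kL x y v1 v2 v3 = 0.
Proof.
move=> x3 y3 disj; rewrite phi_xy_cycle3 //.
have weight_inv u : perm_form x u (moved_weight a b y) = 0.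
  apply: perm_form_invariant => m; rewrite !mxE.
  have [xm|/negPn/eqP->] := boolP (x m != m); last by [].
  have xxm : x (x m) != x m by rewrite (inj_eq (@perm_inj _ x)).
  by rewrite (disj _ xm) (disj _ xxm) !eqxx.
by rewrite !weight_inv !mulr0 !addr0 scale0r.
Qed.

Lemma phi_xy_cyc3_overlap q p1 p2 s1 s2 v1 v2 v3 :
  q != p1 -> p1 != p2 -> q != p2 -> q != s1 -> s1 != s2 -> q != s2 ->
  ~~ [&& p1 != s1, p1 != s2, p2 != s1 & p2 != s2] ->
  phi_xy kL kL (cyc3 q p1 p2) (cyc3 q s1 s2) v1 v2 v3 = 0.
Proof.
move=> ? ? ? ? ? ?.
case: (p1 =P s1) => [?|/eqP ?]; case: (p2 =P s2) => [?|/eqP ?];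
case: (p1 =P s2) => [?|/eqP ?]; case: (p2 =P s1) => [?|/eqP ?]; subst;
  try (match goal with H : is_true (?a != ?a) |- _ => by rewrite eqxx in H end).
all: neq_sym; neq_simpl => _; rewrite phi_xy_cycle3 ?cyc3_is_cycle //.
all: match goal with |- ?c *: _ = 0 => suff -> : c = 0 by rewrite scale0r end.
all: rewrite !perm_form_cyc3 // /pact /moved_weight !mxE ?cyc3VE // !cyc3_moved // !inE.
all: neq_simpl; ring.
Qed.

End ThreeCycleProducts.

Section Pentagons.
Variables (n : nat) (a b : C).
Implicit Types (d l p q r z : 'I_n) (g x y : 'S_n) (u v : 'rV[C]_n).
Local Notation kL := (kappaL_tri a b).

Lemma phi_xy_support x y v1 v2 v3 : phi_xy kL kL x y v1 v2 v3 != 0 ->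
  exists q, [/\ uniq [:: q; y q; y (y q); x q; x (x q)],
               x = cyc3 (x q) (x (x q)) q & y = cyc3 q (y q) (y (y q))].
Proof.
move=> phi_neq0; have /andP[x3 y3] : is_cycle 3 x && is_cycle 3 y.
  by apply: contraR phi_neq0 => /phi_xy_not_cycle3 ->; rewrite eqxx.
have [q /andP[xq yq]|disj] := pickP (fun z => (x z != z) && (y z != z)); last first.
  move/eqP: phi_neq0; case; apply: phi_xy_disjoint => // z xz.
  by apply/eqP; move: (disj z); rewrite xz => /negbFE.
have [p1 [p2 [qp1 p12 qp2 ex]]] := cycle3_cyc3 x3 xq.
have [s1 [s2 [qs1 s12 qs2 ey]]] := cycle3_cyc3 y3 yq.
subst x y.
have [shared1|] := boolP [&& p1 != s1, p1 != s2, p2 != s1 & p2 != s2]; last first.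
  by move=> overlap; move/eqP: phi_neq0; rewrite phi_xy_cyc3_overlap.
case/and4P: shared1 => *; exists q; rewrite !cyc3E //; neq_sym; neq_simpl.
by split; [rewrite !inE !negb_or; neq_simpl | apply: cyc3_rot |].
Qed.

Lemma gmul_cyc3_shared d0 d1 d2 d3 d4 : uniq [:: d0; d1; d2; d3; d4] ->
  let g := gmul (cyc3 d3 d4 d0) (cyc3 d0 d1 d2) in
  [/\ g d0 = d1, g d1 = d2, g d2 = d3, g d3 = d4 & g d4 = d0] /\
  forall z, z \notin [:: d0; d1; d2; d3; d4] -> g z = z.
Proof.
move=> uniq_d g; uniq_neq uniq_d; neq_sym; rewrite /g /gmul.
split; first by split; rewrite permM !cyc3E //; neq_simpl.
by move=> z z_out; uniq_neq z_out; rewrite permM !cyc3E //; neq_simpl.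
Qed.

Lemma gmul_cyc3_shared_cycle5 d0 d1 d2 d3 d4 : uniq [:: d0; d1; d2; d3; d4] ->
  is_cycle 5 (gmul (cyc3 d3 d4 d0) (cyc3 d0 d1 d2)).
Proof.
move=> uniq_d; have [[g0 g1 g2 g3 g4] g_out] := gmul_cyc3_shared uniq_d.
by apply: (@traject_is_cycle _ 5 _ d0) => //=; rewrite ?g0 ?g1 ?g2 ?g3 ?g4.
Qed.

Definition penta_x g q := cyc3 (g (g (g q))) (g (g (g (g q)))) q.
Definition penta_y g q := cyc3 q (g q) (g (g q)).

Lemma gmul_penta g q : is_cycle 5 g -> g q != q -> gmul (penta_x g q) (penta_y g q) = g.
Proof.
move=> g5 gq; have [uniq_t g5q moved] := is_cycle_traject g5 gq.
have [[g0 g1 g2 g3 g4] g_out] := gmul_cyc3_shared uniq_t.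
apply/permP => z; have [zq|z_out] := boolP (z \in traject g q 5).
  by move: zq; rewrite /= !inE => /or4P[|||/orP[]] /eqP->; rewrite ?g0 ?g1 ?g2 ?g3 ?g4.
by rewrite g_out //; apply/esym/eqP; rewrite -[_ == _]negbK moved.
Qed.

Lemma penta_inj g : is_cycle 5 g ->
  {in [set q | g q != q] &, injective (fun q => (penta_x g q, penta_y g q))}.
Proof.
move=> g5 q1 q2; rewrite !inE => gq1 gq2 [ex ey].
have [uniq1 _ _] := is_cycle_traject g5 gq1; have [uniq2 _ _] := is_cycle_traject g5 gq2.
uniq_neq uniq1; uniq_neq uniq2; neq_sym.
have : q1 \in [:: q2; g q2; g (g q2)].
  by rewrite -cyc3_moved // -/(penta_y g q2) -ey cyc3E; neq_simpl.
have : q1 \in [:: g (g (g q2)); g (g (g (g q2))); q2].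
  by rewrite -cyc3_moved // -/(penta_x g q2) -ex /penta_x cyc3E; neq_simpl.
by rewrite !inE => /or3P[] /eqP-> //; rewrite ?orbF; neq_simpl.
Qed.

Lemma phi_xy_penta g x y v1 v2 v3 : gmul x y = g -> phi_xy kL kL x y v1 v2 v3 != 0 ->
  exists2 q, g q != q & (x, y) = (penta_x g q, penta_y g q).
Proof.
move=> <-; case/phi_xy_support=> q [uniq_d ex ey].
have [[g0 g1 g2 g3 _] _] := gmul_cyc3_shared uniq_d.
rewrite -ex -ey in g0 g1 g2 g3; exists q; first by uniq_neq uniq_d; rewrite g0 eq_sym.
by rewrite /penta_x /penta_y g0 g1 g2 g3 -ex -ey.
Qed.

Lemma phi_not_cycle5 g v1 v2 v3 : ~~ is_cycle 5 g -> phi kL kL g v1 v2 v3 = 0.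
Proof.
move=> g_not5; rewrite /phi big1 // => x _; rewrite big1 // => y /eqP gxy.
apply/eqP; apply: contraR g_not5 => /phi_xy_support[q [uniq_d ex ey]].
by rewrite -gxy ex ey gmul_cyc3_shared_cycle5.
Qed.

Lemma phi_cycle5 g q v1 v2 v3 : is_cycle 5 g -> g q != q ->
  phi kL kL g v1 v2 v3 =
  \sum_(z <- traject g q 5) phi_xy kL kL (penta_x g z) (penta_y g z) v1 v2 v3.
Proof.
move=> g5 gq; rewrite /phi pair_big_dep /= -(big_moved_cycle _ g5 gq).
rewrite -(big_imset (fun xy => phi_xy kL kL xy.1 xy.2 v1 v2 v3) (penta_inj g5)) /=.
rewrite big_mkcond [RHS]big_mkcond; apply: eq_bigr => -[x y] _ /=.
have [/imsetP[z] |not_penta] := boolP ((x, y) \in _).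
  by rewrite inE => gz [-> ->]; rewrite gmul_penta ?eqxx.
case: eqP => // gxy; apply/eqP; apply: contraR not_penta => /(phi_xy_penta gxy)[z gz xy].
by apply/imsetP; exists z; rewrite ?inE.
Qed.

Lemma phi_xy_cyc3_shared d0 d1 d2 d3 d4 v1 v2 v3 : uniq [:: d0; d1; d2; d3; d4] ->
  phi_xy kL kL (cyc3 d3 d4 d0) (cyc3 d0 d1 d2) v1 v2 v3 =
  (2 * (a - b) * (perm_form (cyc3 d0 d1 d2) v2 v3 * (v1 0 d4 - v1 0 d3)
                + perm_form (cyc3 d0 d1 d2) v3 v1 * (v2 0 d4 - v2 0 d3)
                + perm_form (cyc3 d0 d1 d2) v1 v2 * (v3 0 d4 - v3 0 d3)))
  *: moved_weight a b (cyc3 d3 d4 d0).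
Proof.
move=> uniq_d; uniq_neq uniq_d; neq_sym.
rewrite phi_xy_cycle3 ?cyc3_is_cycle //; congr (_ *: _).
rewrite !(@perm_form_cyc3 _ d3) // /pact /moved_weight !mxE ?cyc3VE // !cyc3_moved // !inE.
neq_simpl; ring.
Qed.

(* Any coordinate moved by g can serve as the base point d0, so the two cases
   for l cover every coordinate. *)
Lemma penta_sum_coord g d0 d1 d2 d3 d4 v1 v2 v3 l : is_cycle 5 g ->
  uniq [:: d0; d1; d2; d3; d4] ->
  [/\ g d0 = d1, g d1 = d2, g d2 = d3, g d3 = d4 & g d4 = d0] ->
  l = d0 \/ (l \notin [:: d0; d1; d2; d3; d4] /\ g l = l) ->
  (\sum_(z <- [:: d0; d1; d2; d3; d4]) phi_xy kL kL (penta_x g z) (penta_y g z) v1 v2 v3) 0 l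
  = (2 *: psi (kappaC_penta a b) g v1 v2 v3) 0 l.
Proof.
move=> g5 uniq_d [g0 g1 g2 g3 g4] l_cases.
have moved_d m : g m != m -> m \in [:: d0; d1; d2; d3; d4].
  have gd0 : g d0 != d0 by uniq_neq uniq_d; rewrite g0 eq_sym.
  by have [_ _ ->] := is_cycle_traject g5 gd0; rewrite /= g0 g1 g2 g3 => ?.
have moved_gg m : (g * g)%g m != m -> m \in [:: d0; d1; d2; d3; d4].
  by move=> ggm; apply: moved_d; apply: contraNneq ggm => gm; rewrite permM gm gm.
rewrite /psi !kappaC_penta_cycle5 // !(@perm_form_seq _ _ [:: d0; d1; d2; d3; d4]) //.
rewrite !big_cons !big_nil /penta_x /penta_y !permM g0 g1 g2 g3 g4 ?g0 ?g1 ?g2 ?g3 ?g4.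
uniq_neq uniq_d; neq_sym.
rewrite !phi_xy_cyc3_shared; try by rewrite /= !inE !negb_or; neq_simpl.
rewrite !perm_form_cyc3 // /pact /moved_weight !mxE !cyc3_moved // !inE.
case: l_cases => [->|[l_out gl]].
  have -> : (g^-1)%g d0 = d4 by rewrite -g4 permK.
  neq_simpl; ring.
have -> : (g^-1)%g l = l by rewrite -{1}gl permK.
uniq_neq l_out; neq_simpl; ring.
Qed.

End Pentagons.

Theorem proposition7p5 (n : nat) (hn : (3 <= n)%N) (a b : C) :
  forall (g : 'S_n) (v1 v2 v3 : 'rV[C]_n),
    phi (kappaL_tri a b) (kappaL_tri a b) g v1 v2 v3
    = 2 *: psi (kappaC_penta a b) g v1 v2 v3.
Proof.
move=> g v1 v2 v3; have [g5|not5] := boolP (is_cycle 5 g); last first.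
  by rewrite phi_not_cycle5 // /psi !kappaC_penta_not_cycle5 // !scale0r !addr0 scaler0.
apply/rowP => l; have [q gq l_cases] : exists2 q, g q != q & l = q \/ g l = l.
  have [gl|/negPn/eqP gl] := boolP (g l != l); first by exists l; [|left].
  by have [q gq] := is_cycle_moved (isT : (1 < 5)%N) g5; exists q; [|right].
have [uniq_t g5q moved] := is_cycle_traject g5 gq.
rewrite (phi_cycle5 a b v1 v2 v3 g5 gq); apply: penta_sum_coord => //.
case: l_cases => [|gl]; [left | right; split] => //.
by rewrite -moved gl eqxx.
Qed.
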